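(* Let $\sigma_0,\sigma_\epsilon>0$, $\theta_0\in\mathbb{R}$, prior $\Theta\sim N(\theta_0,\sigma_0^2)$, signal $X=\Theta+\epsilon$ with $\epsilon\sim\mathrm{Laplace}(0,\sigma_\epsilon)$ independent of $\Theta$, and let $\theta_1(x)=\mathbb{E}[\Theta\mid X=x]$. Then for large signals the shift is asymptotically constant: $\theta_1(x)-\theta_0\approx\operatorname{sgn}(x-\theta_0)\frac{\sigma_0^2}{\sigma_\epsilon}$, i.e. $$\lim_{x\to+\infty}(\theta_1(x)-\theta_0)=\frac{\sigma_0^2}{\sigma_\epsilon},\qquad \lim_{x\to-\infty}(\theta_1(x)-\theta_0)=-\frac{\sigma_0^2}{\sigma_\epsilon}.$$
   Context: $\mathrm{Laplace}(\mu,s)$ has density $t\mapsto\frac{1}{2s}e^{-|t-\mu|/s}$. The posterior mean is $\theta_1(x)=\frac{\int\theta f_\Theta(\theta)l_\epsilon(x-\theta)d\theta}{\int f_\Theta(\theta)l_\epsilon(x-\theta)d\theta}$. *)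

From HB Require Import structures.
From mathcomp Require Import all_boot all_order all_algebra.
From mathcomp Require Import all_classical all_reals all_analysis.
Set Implicit Arguments. Unset Strict Implicit. Unset Printing Implicit Defensive.
Import Order.TTheory GRing.Theory Num.Theory.
Import numFieldNormedType.Exports.
Local Open Scope classical_set_scope.
Local Open Scope ring_scope.

Definition laplace_pdf {R : realType} (mu s t : R) : R :=
  (s *+ 2)^-1 * expR (- `|t - mu| / s).

(* Posterior mean of Theta ~ N(theta0, sigma0^2) given X = Theta + eps = x,
   eps ~ Laplace(0, sigmae) independent of Theta:
   theta1(x) = (\int theta f_Theta(theta) l(x - theta)) / (\int f_Theta(theta) l(x - theta)),
   integrals are Lebesgue integrals over R. *)
Definition posterior_mean {R : realType} (theta0 sigma0 sigmae x : R) : R :=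
  (\int[lebesgue_measure]_(th in [set: R])
      (th * normal_pdf theta0 sigma0 th * laplace_pdf 0 sigmae (x - th)))
  / (\int[lebesgue_measure]_(th in [set: R])
      (normal_pdf theta0 sigma0 th * laplace_pdf 0 sigmae (x - th))).

From HB Require Import structures.
From mathcomp Require Import all_boot all_order all_algebra.
From mathcomp Require Import all_classical all_reals all_analysis.
From mathcomp Require Import measurable_realfun ring lra.
Import Order.TTheory GRing.Theory Num.Theory.
Import numFieldNormedType.Exports.
Local Open Scope classical_set_scope.
Local Open Scope ring_scope.

(* Write the Laplace kernel at [x = e y], [|e| = 1], as
   [expR (- |u| / b) = expR (- u / b) * laplace_ratio b u] with [u = y - e t].
   The exponential factor tilts the normal prior [N(m, s^2)] into
   [N(c, s^2)], [c = m + e s^2 / b], up to a constant, so the posterior mean is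
   the ratio of the integrals of [t phi_c(t) w(t)] and [phi_c(t) w(t)], where
   the weight [w] lies in [0, 1] and [1 - w(t) <= expR (- 2 (y - e t) / b)].
   Since [phi_c] has exponential moments, both integrals differ from the mean
   [c] and the mass [1] of [phi_c] by [O(expR (- 2 y / b))]. *)

Section real_valued_integrals.
Context {d} {T : measurableType d} {R : realType} {mu : {measure set T -> \bar R}}.

Lemma integrableD_EFin {f g : T -> R} : mu.-integrable setT (EFin \o f) ->
  mu.-integrable setT (EFin \o g) -> mu.-integrable setT (EFin \o (f \+ g)).
Proof. by move=> fi gi; apply: eq_integrable (integrableD _ fi gi). Qed.

Lemma integrableZl_EFin (k : R) {f : T -> R} : mu.-integrable setT (EFin \o f) ->
  mu.-integrable setT (EFin \o (fun t => k * f t)).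
Proof. by move=> fi; apply: eq_integrable (integrableZl _ k fi). Qed.

Lemma integrableM_le1 {f w : T -> R} : mu.-integrable setT (EFin \o f) ->
  measurable_fun setT w -> (forall t, `|w t| <= 1) ->
  mu.-integrable setT (EFin \o (f \* w)).
Proof.
move=> fi mw w1; apply: eq_integrable (integrableMl _ fi mw _) => //.
exists 1; split => // M M1 t _ /=; exact: le_trans (w1 t) (ltW M1).
Qed.

Lemma cvg_Rintegral_weighted (f h : T -> R) (w : R -> T -> R) (k : R) : 0 < k ->
  mu.-integrable setT (EFin \o f) -> mu.-integrable setT (EFin \o h) ->
  (forall y, measurable_fun setT (w y)) -> (forall y t, 0 <= w y t <= 1) ->
  (forall y t, `|f t| * (1 - w y t) <= expR (- (k * y)) * h t) ->
  \int[mu]_t (f t * w y t) @[y --> +oo] --> \int[mu]_t f t.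
Proof.
move=> k0 fi hi mw w01 fwh.
have Dw_le1 y t : `|1 - w y t| <= 1.
  by have /andP[w0 w1] := w01 y t; rewrite ger0_norm ?subr_ge0 // lerBlDr lerDl.
have mDw y : measurable_fun setT (fun t => 1 - w y t) by exact: measurable_funB.
have int_fDw y := integrableM_le1 fi (mDw y) (Dw_le1 y).
pose r y := \int[mu]_t (f t * (1 - w y t)).
have fwE y : \int[mu]_t (f t * w y t) = \int[mu]_t f t - r y.
  rewrite /r -RintegralB //; last exact: int_fDw.
  by apply: eq_Rintegral => t _; ring.
have r_le y : `|r y| <= expR (- (k * y)) * \int[mu]_t h t.
  rewrite -RintegralZl //; apply: le_trans (le_normr_Rintegral _ (int_fDw y)) _ => //.
  apply: le_Rintegral => //; first exact: integrable_norm (int_fDw y).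
    exact: integrableZl_EFin.
  move=> t _; have /andP[_ w1] := w01 y t.
  by rewrite normrM [`|1 - _|]ger0_norm ?subr_ge0 ?fwh.
have expR_cvg0 : expR (- (k * y)) @[y --> +oo] --> 0.
  apply: (cvg_comp (fun y => k * y) (fun x => expR (- x))); last exact: cvgr_expR.
  exact: gt0_cvgMry.
have bound_cvg0 : expR (- (k * y)) * \int[mu]_t h t @[y --> +oo] --> 0.
  by rewrite -(mul0r (\int[mu]_t h t)); exact: cvgM expR_cvg0 (cvg_cst _).
have r_cvg0 : r y @[y --> +oo] --> 0.
  apply: norm_cvg0; apply: (squeeze_cvgr _ (cvg_cst 0) bound_cvg0).
  by apply: nearW => y; rewrite normr_ge0 r_le.
apply/subr_cvg0; rewrite -oppr0 (eq_cvg _ _ (g := fun y => - r y)); first exact: cvgN.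
by move=> y; rewrite fwE addrAC subrr add0r.
Qed.

End real_valued_integrals.

Section normal_moments.
Context {R : realType}.
Notation mu := (@lebesgue_measure R).
Implicit Types (m s l t : R).

Lemma normal_pdf_tilt m s l t : s != 0 ->
  expR (l * t) * normal_pdf m s t =
  expR (l * m + l ^+ 2 * s ^+ 2 / 2) * normal_pdf (m + l * s ^+ 2) s t.
Proof.
move=> s0; rewrite /normal_pdf (negbTE s0) /normal_fun mulrCA [RHS]mulrCA.
by rewrite -!expRD; congr (_ * expR _); field.
Qed.

Lemma integrable_expR_normal_pdf m s l : s != 0 ->
  mu.-integrable setT (EFin \o (fun t => expR (l * t) * normal_pdf m s t)).
Proof.
move=> s0; have := integrable_normal_pdf (m + l * s ^+ 2) s.
move=> /(integrableZl_EFin (expR (l * m + l ^+ 2 * s ^+ 2 / 2))).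
by apply: eq_integrable => // t _ /=; rewrite normal_pdf_tilt.
Qed.

Lemma Rintegral_normal_pdf m s : \int[mu]_t normal_pdf m s t = 1.
Proof. by rewrite /Rintegral integral_normal_pdf. Qed.

Lemma Rintegral_expR_normal_pdf m s l : s != 0 ->
  \int[mu]_t (expR (l * t) * normal_pdf m s t) = expR (l * m + l ^+ 2 * s ^+ 2 / 2).
Proof.
move=> s0; under eq_Rintegral do rewrite normal_pdf_tilt //.
by rewrite RintegralZl ?integrable_normal_pdf // Rintegral_normal_pdf mulr1.
Qed.

Lemma integrable_id_normal_pdf m s : s != 0 ->
  mu.-integrable setT (EFin \o (fun t => t * normal_pdf m s t)).
Proof.
move=> s0; have := integrableD_EFin (integrable_expR_normal_pdf m s 1 s0)
  (integrable_expR_normal_pdf m s (-1) s0).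
apply: le_integrable => //.
  by apply/measurable_EFinP/measurable_funM => //; exact: measurable_normal_pdf.
move=> t _ /=; rewrite !mul1r mulN1r -mulrDl lee_fin !normrM ler_wpM2r //.
have absE : `|t| <= expR `|t| by rewrite (le_trans _ (expR_ge1Dx _)) ?lerDr.
rewrite (le_trans absE) // [X in _ <= X]ger0_norm ?addr_ge0 ?expR_ge0 //.
have [t0|t0] := leP 0 t.
  by rewrite ger0_norm // lerDl expR_ge0.
by rewrite ltr0_norm // lerDr expR_ge0.
Qed.

(* Integrating [1 + y <= expR y] at [y = l (t - m) - l^2 s^2 / 2] against the
   density gives [l (M - m) <= l^2 s^2 / 2] for the mean [M] and every [l];
   then take [l = (M - m) / s^2]. *)
Lemma Rintegral_id_normal_pdf m s : s != 0 ->
  \int[mu]_t (t * normal_pdf m s t) = m.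
Proof.
move=> s0; set M := \int[mu]_t _.
have ub l : l * (M - m) <= l ^+ 2 * s ^+ 2 / 2.
  pose a := l * m + l ^+ 2 * s ^+ 2 / 2.
  have le1Dexp t : (1 - a) * normal_pdf m s t + l * (t * normal_pdf m s t) <=
                   expR (- a) * (expR (l * t) * normal_pdf m s t).
    rewrite [in leRHS]mulrA -expRD mulrA -mulrDl ler_wpM2r ?normal_pdf_ge0 //.
    by rewrite (le_trans _ (expR_ge1Dx _)) // addrA.
  have int_phi := integrable_normal_pdf m s.
  have int_id := integrable_id_normal_pdf m s s0.
  have int_exp := integrable_expR_normal_pdf m s l s0.
  have int1 := integrableZl_EFin (1 - a) int_phi.
  have int2 := integrableZl_EFin l int_id.
  have := le_Rintegral measurableT (integrableD_EFin int1 int2)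
    (integrableZl_EFin (expR (- a)) int_exp) (fun t _ => le1Dexp t).
  rewrite RintegralD // !RintegralZl // Rintegral_normal_pdf.
  rewrite Rintegral_expR_normal_pdf // -expRD addNr expR0 -/M /a.
  lra.
have s2 : s ^+ 2 != 0 by rewrite expf_neq0.
have X0 : 0 <= (M - m) ^+ 2 / s ^+ 2 by rewrite divr_ge0 ?sqr_ge0.
have := ub ((M - m) / s ^+ 2).
rewrite (_ : _ * (M - m) = (M - m) ^+ 2 / s ^+ 2); last by field.
rewrite (_ : _ * s ^+ 2 / 2 = (M - m) ^+ 2 / s ^+ 2 / 2); last by field.
move=> X2; have /eqP : (M - m) ^+ 2 / s ^+ 2 = 0 by lra.
by rewrite mulf_eq0 invr_eq0 (negbTE s2) orbF sqrf_eq0 subr_eq0 => /eqP.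
Qed.

End normal_moments.

Section laplace_ratio.
Context {R : realType}.
Implicit Types (b e u y t : R).

Definition laplace_ratio b u : R := expR ((u - `|u|) / b).

Lemma laplace_ratio_ge0 b u : 0 <= laplace_ratio b u.
Proof. exact: expR_ge0. Qed.

Lemma laplace_ratio_le1 b u : 0 < b -> laplace_ratio b u <= 1.
Proof. by move=> b0; rewrite expR_le1 pmulr_lle0 ?invr_gt0 // subr_le0 ler_norm. Qed.

Lemma measurable_laplace_ratio b e y :
  measurable_fun setT (fun t => laplace_ratio b (y - e * t)).
Proof.
apply: (measurableT_comp (f := laplace_ratio b)).
  apply: measurableT_comp => //; apply: measurable_funM => //.
  exact: measurable_funB.
by apply: measurable_funB => //; exact: measurable_funM.
Qed.

Lemma laplace_ratio_tail b u : 0 < b -> 1 - laplace_ratio b u <= expR (- (2 / b * u)).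
Proof.
move=> b0; have [u0|u0] := leP 0 u.
  by rewrite /laplace_ratio ger0_norm // subrr mul0r expR0 subrr expR_ge0.
rewrite (le_trans (_ : _ <= 1)) ?lerBlDr ?lerDl ?laplace_ratio_ge0 //.
by rewrite -[leLHS]expR0 ler_expR oppr_ge0 pmulr_rle0 ?divr_gt0 ?ltW.
Qed.

Lemma laplace_pdf_factor b e y t : `|e| = 1 ->
  laplace_pdf 0 b (e * y - t) =
  (b *+ 2)^-1 * expR (- y / b) * expR (e / b * t) * laplace_ratio b (y - e * t).
Proof.
move=> e1; have ee : e * e = 1 by rewrite -expr2 -real_normK ?num_real // e1 expr1n.
rewrite /laplace_pdf /laplace_ratio.
have -> : `|e * y - t - 0| = `|y - e * t|.
  by rewrite subr0 -[LHS]mul1r -e1 -normrM mulrBr mulrA ee mul1r.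
rewrite -!mulrA -!expRD; congr (_ * expR _).
by ring.
Qed.

End laplace_ratio.

Section posterior_mean_asymptotics.
Context {R : realType}.
Notation mu := (@lebesgue_measure R).
Implicit Types (m s b e y : R).

Lemma posterior_meanE m s b e y : s != 0 -> 0 < b -> `|e| = 1 ->
  posterior_mean m s b (e * y) =
  \int[mu]_t (t * normal_pdf (m + e / b * s ^+ 2) s t * laplace_ratio b (y - e * t)) /
  \int[mu]_t (normal_pdf (m + e / b * s ^+ 2) s t * laplace_ratio b (y - e * t)).
Proof.
move=> s0 b0 e1; set c := m + e / b * s ^+ 2.
set w := fun t => laplace_ratio b (y - e * t).
pose K := (b *+ 2)^-1 * expR (- y / b) * expR (e / b * m + (e / b) ^+ 2 * s ^+ 2 / 2).
have factor t :
    normal_pdf m s t * laplace_pdf 0 b (e * y - t) = K * (normal_pdf c s t * w t).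
  rewrite laplace_pdf_factor // /K /c /w.
  transitivity ((b *+ 2)^-1 * expR (- y / b) * laplace_ratio b (y - e * t) *
                (expR (e / b * t) * normal_pdf m s t)); first by ring.
  by rewrite normal_pdf_tilt //; ring.
have K0 : K != 0 by rewrite /K !mulf_neq0 ?gt_eqF ?expR_gt0 ?invr_gt0 ?pmulrn_lgt0.
have mw : measurable_fun setT w := measurable_laplace_ratio b e y.
have w_le1 t : `|w t| <= 1 by rewrite ger0_norm ?laplace_ratio_ge0 ?laplace_ratio_le1.
have intD := integrableM_le1 (integrable_normal_pdf c s) mw w_le1.
have intN := integrableM_le1 (integrable_id_normal_pdf c s s0) mw w_le1.
have factorN t : t * normal_pdf m s t * laplace_pdf 0 b (e * y - t) =
                 K * (t * normal_pdf c s t * w t).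
  by rewrite -mulrA factor; ring.
rewrite /posterior_mean.
under eq_Rintegral do rewrite factorN.
under [X in _ / X]eq_Rintegral do rewrite factor.
by rewrite !RintegralZl // invfM mulrACA divff // mul1r.
Qed.

Lemma posterior_mean_cvg m s b e : s != 0 -> 0 < b -> `|e| = 1 ->
  posterior_mean m s b (e * y) @[y --> +oo] --> m + e / b * s ^+ 2.
Proof.
move=> s0 b0 e1; set c := m + e / b * s ^+ 2.
pose w y t := laplace_ratio b (y - e * t).
pose l := 2 / b * e.
have k0 : 0 < 2 / b by rewrite divr_gt0.
have mw y : measurable_fun setT (w y) := measurable_laplace_ratio b e y.
have w01 y t : 0 <= w y t <= 1 by rewrite laplace_ratio_ge0 laplace_ratio_le1.
have tail y t : 1 - w y t <= expR (- (2 / b * y)) * expR (l * t).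
  rewrite -expRD (_ : - (2 / b * y) + l * t = - (2 / b * (y - e * t))).
    exact: laplace_ratio_tail.
  by rewrite /l; ring.
have cvg_den : \int[mu]_t (normal_pdf c s t * w y t) @[y --> +oo] --> (1 : R).
  have := @cvg_Rintegral_weighted _ _ _ mu (normal_pdf c s)
    (fun t => expR (l * t) * normal_pdf c s t) w _ k0 (integrable_normal_pdf c s)
    (integrable_expR_normal_pdf c s l s0) mw w01.
  rewrite Rintegral_normal_pdf; apply => y t.
  rewrite ger0_norm ?normal_pdf_ge0 // [leRHS]mulrA [leRHS]mulrC.
  by rewrite ler_wpM2l ?normal_pdf_ge0 ?tail.
have int_h : mu.-integrable setT
    (EFin \o (fun t => `|t| * (expR (l * t) * normal_pdf c s t))).
  have := integrable_norm (integrable_id_normal_pdf (c + l * s ^+ 2) s s0).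
  move=> /(integrableZl_EFin (expR (l * c + l ^+ 2 * s ^+ 2 / 2))).
  apply: eq_integrable => // t _ /=.
  by rewrite normal_pdf_tilt // normrM (ger0_norm (normal_pdf_ge0 _ _ _)) mulrCA.
have cvg_num : \int[mu]_t (t * normal_pdf c s t * w y t) @[y --> +oo] --> c.
  have := @cvg_Rintegral_weighted _ _ _ mu (fun t => t * normal_pdf c s t)
    _ w _ k0 (integrable_id_normal_pdf c s s0) int_h mw w01.
  rewrite Rintegral_id_normal_pdf //; apply => y t.
  rewrite normrM (ger0_norm (normal_pdf_ge0 _ _ _)) -mulrA [leRHS]mulrCA.
  rewrite ler_wpM2l // [leRHS]mulrA [leRHS]mulrC.
  by rewrite ler_wpM2l ?normal_pdf_ge0 ?tail.
rewrite (eq_cvg _ _ (fun y => posterior_meanE m s b e y s0 b0 e1)).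
by have := cvgM cvg_num (cvgV (oner_neq0 R) cvg_den); rewrite invr1 mulr1; exact.
Qed.

End posterior_mean_asymptotics.

Theorem mainTheorem16 (R : realType) (sigma0 sigmae theta0 : R) :
  0 < sigma0 -> 0 < sigmae ->
  (posterior_mean theta0 sigma0 sigmae x - theta0 @[x --> +oo]
     --> sigma0 ^+ 2 / sigmae) /\
  (posterior_mean theta0 sigma0 sigmae x - theta0 @[x --> -oo]
     --> - (sigma0 ^+ 2 / sigmae)).
Proof.
move=> s0 b0.
have shift e : `|e| = 1 -> posterior_mean theta0 sigma0 sigmae (e * x) - theta0
    @[x --> +oo] --> e * (sigma0 ^+ 2 / sigmae).
  move=> e1; rewrite (_ : e * _ = theta0 + e / sigmae * sigma0 ^+ 2 - theta0).
    exact: cvgB (posterior_mean_cvg _ _ _ _ (lt0r_neq0 s0) b0 e1) (cvg_cst _).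
  by ring.
split.
- have := shift 1 (normr1 _); rewrite mul1r.
  by under eq_fun do rewrite mul1r.
- apply/cvgNy_compNP; have := shift (-1) (normrN1 _); rewrite mulN1r.
  by under eq_fun do rewrite mulN1r.
Qed.
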